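(* Let $p>2$ be prime. For $t\in\mathbb{Z}/p\mathbb{Z}$ put $a_t(p)=-\sum_{x\bmod p}\left(\frac{x^3-t^2x+t^2}{p}\right)$. Then $\sum_{t\bmod p} a_t(p) = -2p$.
   Context: $\left(\frac{\cdot}{p}\right)$ denotes the Legendre symbol (equal to $0$ at multiples of $p$). *)

From mathcomp Require Import all_boot all_order all_algebra.
Set Implicit Arguments. Unset Strict Implicit. Unset Printing Implicit Defensive.
Import Order.TTheory GRing.Theory Num.Theory.
Local Open Scope ring_scope.

Definition legendre (a : int) (p : nat) : int :=
  if (p%:Z %| a)%Z then 0
  else if [exists x : 'I_p, ((x%:Z) ^+ 2 == a %[mod p%:Z])%Z] then 1 else -1.

Definition a_t (p : nat) (t : int) : int :=
  - \sum_(x < p) legendre ((x%:Z) ^+ 3 - t ^+ 2 * x%:Z + t ^+ 2) p.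

From mathcomp Require Import all_boot all_order all_algebra.
From mathcomp Require Import ring.
Set Implicit Arguments. Unset Strict Implicit. Unset Printing Implicit Defensive.
Import Order.TTheory GRing.Theory Num.Theory.
Local Open Scope ring_scope.

(* Everything happens over an arbitrary finite field F of odd characteristic,
   q = #|F|, with quadratic character chi.  The column x = 0 contributes
   sum_t chi(t^2) = q - 1 and the column x = 1 contributes q.  For x <> 0, 1
   substitute t = x s: then x^3 - t^2 x + t^2 = x^2 (x (1 - s^2) + s^2), so the
   summand is chi(x (1 - s^2) + s^2), which is affine in x.  Summing over all
   x first gives q when s = +-1 and 0 otherwise, since chi sums to 0 over F;
   removing the terms x = 0 and x = 1 leaves 2q - (q - 1) - q = 1.  Altogether
   the double sum is 2q. *)

Section QuadraticCharacter.
Variable F : finFieldType.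

Definition is_square (y : F) : bool := [exists x : F, x ^+ 2 == y].

Definition qchar (y : F) : int :=
  if y == 0 then 0 else if is_square y then 1 else -1.

Definition nonzero_square : pred F := [pred y | (y != 0) && is_square y].
Definition nonsquare : pred F := [pred y | (y != 0) && ~~ is_square y].

Lemma qchar0 : qchar 0 = 0.
Proof. by rewrite /qchar eqxx. Qed.

Lemma qchar_sqr s : s != 0 -> qchar (s ^+ 2) = 1.
Proof.
move=> s_neq0; rewrite /qchar expf_eq0 (negbTE s_neq0) andbF.
by case: ifP => // /existsP []; exists s.
Qed.

Lemma qchar1 : qchar 1 = 1.
Proof. by rewrite -(expr1n F 2) qchar_sqr ?oner_neq0. Qed.

Lemma is_squareMsqr x y : x != 0 -> is_square (x ^+ 2 * y) = is_square y.
Proof.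
move=> x_neq0; apply/existsP/existsP => [[z /eqP xyE] | [w /eqP yE]].
  by exists (z / x); rewrite expr_div_n xyE mulrC mulKf // expf_neq0.
by exists (x * w); rewrite exprMn yE.
Qed.

Lemma qcharMsqr x y : x != 0 -> qchar (x ^+ 2 * y) = qchar y.
Proof.
move=> x_neq0; rewrite /qchar is_squareMsqr // mulf_eq0 expf_eq0.
by rewrite (negbTE x_neq0) andbF.
Qed.

Lemma sum_qchar_sqr : \sum_(t : F) qchar (t ^+ 2) = (#|F|.-1)%:Z.
Proof.
rewrite (bigD1 0) //= expr0n qchar0 add0r -(cardC1 (0 : F)) -sum1_card.
rewrite -natz natr_sum; apply: eq_big => [t | t t_neq0]; first by rewrite !inE.
exact: qchar_sqr.
Qed.

Lemma sum_qchar_affine a b : a != 0 -> \sum_(x : F) qchar (x * a + b) = \sum_y qchar y.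
Proof.
move=> a_neq0; have affine_inj : injective (fun x : F => x * a + b).
  by move=> x y /addIr /(mulIf a_neq0).
by rewrite [RHS](reindex_inj affine_inj).
Qed.

Hypothesis two_neq0 : (2%:R : F) != 0.

Lemma neq_oppr (s : F) : s != 0 -> s != - s.
Proof.
move=> s_neq0; apply: contra_neq two_neq0 => sE.
have : 2%:R * s = 0 by rewrite mulr_natl mulr2n {1}sE addNr.
by move/eqP; rewrite mulf_eq0 (negbTE s_neq0) orbF => /eqP.
Qed.

Lemma sum_sqr_eq1 (c : int) :
  \sum_(s : F) (if s ^+ 2 == 1 then c else 0) = c *+ 2.
Proof.
rewrite -big_mkcond /= (eq_bigl (fun s => s \in pred2 1 (-1))) => [|s]; last first.
  by rewrite !inE sqrf_eq1.
by rewrite sumr_const card2 neq_oppr ?oner_neq0.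
Qed.

(* Squaring is two-to-one from F^* onto the nonzero squares. *)
Lemma card_nonzero_square : (#|nonzero_square| * 2)%N = #|F|.-1.
Proof.
rewrite -(cardC1 (0 : F)) -[RHS]sum1_card.
rewrite (partition_big (fun x : F => x ^+ 2) nonzero_square) => [|x]; last first.
  rewrite !inE => x_neq0; rewrite /nonzero_square /= expf_eq0 (negbTE x_neq0) andbF.
  by apply/existsP; exists x.
rewrite -sum1_card big_distrl /=; apply: eq_bigr => y /andP[y_neq0 /existsP[s /eqP sE]].
have s_neq0 : s != 0 by apply: contraNneq y_neq0 => s0; rewrite -sE s0 expr0n.
transitivity #|pred2 s (- s)|; first by rewrite card2 neq_oppr.
rewrite -sum1_card; apply: eq_bigl => x; rewrite !inE -sE eqf_sqr.
by case: eqP => [->|_] //=; rewrite andb_idl // => /eqP->; rewrite oppr_eq0.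
Qed.

Lemma card_nonsquare : #|nonsquare| = #|nonzero_square|.
Proof.
have := cardID is_square (predC1 (0 : F)); rewrite cardC1 -card_nonzero_square.
have -> : #|[predI predC1 0 & is_square]| = #|nonzero_square|.
  by apply: eq_card => y; rewrite !inE.
have -> : #|[predD predC1 0 & is_square]| = #|nonsquare|.
  by apply: eq_card => y; rewrite !inE andbC.
by rewrite muln2 -addnn => /addnI.
Qed.

Lemma sum_qchar : \sum_(y : F) qchar y = 0.
Proof.
rewrite (bigD1 0) //= qchar0 add0r (bigID is_square) /=.
rewrite (eq_bigr (fun=> 1)) => [|y /andP[y_neq0 y_sq]]; last first.
  by rewrite /qchar (negbTE y_neq0) y_sq.
rewrite [X in _ + X](eq_bigr (fun=> -1)) => [|y /andP[y_neq0 y_nsq]]; last first.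
  by rewrite /qchar (negbTE y_neq0) (negbTE y_nsq).
rewrite sumrN (eq_bigl (fun y => y \in nonzero_square)) //.
rewrite [X in _ - X](eq_bigl (fun y => y \in nonsquare)) //.
by rewrite !sumr_const card_nonsquare subrr.
Qed.

Lemma sum_qchar_line (s : F) :
  \sum_(x | (x != 0) && (x != 1)) qchar (x * (1 - s ^+ 2) + s ^+ 2)
    = (if s ^+ 2 == 1 then #|F|%:Z else 0) - qchar (s ^+ 2) - 1.
Proof.
have full_sum : \sum_(x : F) qchar (x * (1 - s ^+ 2) + s ^+ 2)
    = (if s ^+ 2 == 1 then #|F|%:Z else 0).
  case: eqP => [-> | /eqP s2_neq1].
    under eq_bigr do rewrite subrr mulr0 add0r qchar1.
    by rewrite sumr_const natz.
  by rewrite sum_qchar_affine ?sum_qchar // subr_eq0 eq_sym.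
rewrite -full_sum [in RHS](bigD1 0) //= [in RHS](bigD1 1) ?oner_neq0 //=.
by rewrite mul0r add0r mul1r subrK qchar1; ring.
Qed.

Lemma sum_qchar_cubic :
  \sum_(x : F) \sum_(t : F) qchar (x ^+ 3 - t ^+ 2 * x + t ^+ 2) = #|F|%:Z *+ 2.
Proof.
have column0 : \sum_t qchar (0 ^+ 3 - t ^+ 2 * 0 + t ^+ 2) = (#|F|.-1)%:Z.
  by rewrite -sum_qchar_sqr; apply: eq_bigr => t _; congr qchar; ring.
have column1 : \sum_t qchar (1 ^+ 3 - t ^+ 2 * 1 + t ^+ 2) = #|F|%:Z.
  rewrite -natz -sumr_const; apply: eq_bigr => t _.
  by rewrite -qchar1; congr qchar; ring.
have column_scaled (x : F) : x != 0 ->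
    \sum_t qchar (x ^+ 3 - t ^+ 2 * x + t ^+ 2)
      = \sum_s qchar (x * (1 - s ^+ 2) + s ^+ 2).
  move=> x_neq0; rewrite (reindex_inj (mulfI x_neq0)) /=; apply: eq_bigr => s _.
  by rewrite -[RHS](qcharMsqr _ x_neq0); congr qchar; ring.
rewrite (bigD1 0) //= column0 (bigD1 1) ?oner_neq0 //= column1.
under eq_bigr => x /andP[x_neq0 _] do rewrite column_scaled //.
rewrite exchange_big /=; under eq_bigr do rewrite sum_qchar_line.
rewrite !sumrB sum_sqr_eq1 sum_qchar_sqr sumr_const.
have : (0 < #|F|)%N by apply/card_gt0P; exists 0.
by case: #|F| => // q _; rewrite -addn1 natrD; ring.
Qed.

End QuadraticCharacter.

Section PrimeField.
Variable p : nat.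
Hypothesis p_prime : prime p.

Lemma Fp_val_lt (y : 'F_p) : (val y < p)%N.
Proof. by apply: leq_trans (ltn_ord y) _; rewrite Fp_cast. Qed.

Lemma Fp_natr_val (y : 'F_p) : (val y)%:R = y.
Proof. by apply: val_inj; rewrite /= val_Fp_nat // modn_small ?Fp_val_lt. Qed.

Lemma sum_ord_Fp (f : 'F_p -> int) : \sum_(x < p) f x%:R = \sum_(y : 'F_p) f y.
Proof.
rewrite (reindex (fun x : 'I_p => x%:R : 'F_p)) //.
exists (fun y => Ordinal (Fp_val_lt y)) => [x _ | y _]; last exact: Fp_natr_val.
by apply: val_inj; rewrite /= val_Fp_nat // modn_small.
Qed.

Lemma Fp_two_neq0 : (2 < p)%N -> (2%:R : 'F_p) != 0.
Proof.
by move=> p_gt2; apply/eqP => /(congr1 (@nat_of_ord _)); rewrite val_Fp_nat // modn_small.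
Qed.

Lemma legendre_qchar (a : int) : legendre a p = qchar (a%:~R : 'F_p).
Proof.
have dvdpE (b : int) : (p%:Z %| b)%Z = (b%:~R == 0 :> 'F_p).
  by rewrite (dvdz_pcharf (pchar_Fp p_prime)).
rewrite /legendre /qchar dvdpE; case: (_ == 0) => //.
have sqr_modE (x : nat) :
    ((x%:Z) ^+ 2 == a %[mod p%:Z])%Z = ((x%:R : 'F_p) ^+ 2 == a%:~R).
  by rewrite eqz_mod_dvd dvdpE rmorphB rmorphXn /= subr_eq0.
suff -> : [exists x : 'I_p, ((x%:Z) ^+ 2 == a %[mod p%:Z])%Z]
    = is_square (a%:~R : 'F_p) by [].
apply/existsP/existsP => [[x] | [y]]; first by rewrite sqr_modE; exists x%:R.
by exists (Ordinal (Fp_val_lt y)); rewrite sqr_modE Fp_natr_val.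
Qed.

End PrimeField.

Theorem mainTheorem6 (p : nat) (hp : prime p) (hp2 : (2 < p)%N) :
  \sum_(t < p) a_t p (t%:Z) = - (2 * p%:Z).
Proof.
rewrite /a_t sumrN mulr_natl; congr (- _).
rewrite -[in RHS](card_Fp hp) -sum_qchar_cubic ?Fp_two_neq0 // exchange_big /=.
rewrite -[RHS]sum_ord_Fp //; apply: eq_bigr => x _.
rewrite -[RHS]sum_ord_Fp //; apply: eq_bigr => t _.
(* Over plain nats the final conversion (m%:Z)%:~R = m%:R is cheap. *)
case: x t => [m _] [n _] /=.
by rewrite legendre_qchar // rmorphD rmorphB !rmorphXn rmorphM rmorphXn.
Qed.
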